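(* Let $(K,D,v)$ be a VD-field such that $(K,v)$ is spherically complete, and assume that the map $D$ induced on the residue field $Kv$ is surjective. Then $D$ is surjective on $K$.
   Context: A VD-field is a valued field $(K,v)$ (valuation ring $\mathcal{O}$, residue field $Kv$, value group $vK$) with an additive map $D:K\to K$ such that: $vDa\ge va$ for all $a\in K$; $vK=\{va\mid a\in K,\ vDa>va\}$; there is $e\in\mathcal{O}$ with $D(ab)=aDb+bDa+e(Da)(Db)$ for all $a,b\in K$. The induced map on $Kv$ is $D(av)=(Da)v$ for $a\in\mathcal{O}$. $(K,v)$ is spherically complete if in the ultrametric space $u(a,b)=v(a-b)$ every nest (family totally ordered by inclusion) of balls has non-empty intersection. *)

From mathcomp Require Import all_boot all_algebra.
Set Implicit Arguments. Unset Strict Implicit. Unset Printing Implicit Defensive.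
Import GRing.Theory.
Local Open Scope ring_scope.

Definition ordered_abelian_group (G : zmodType) (le : rel G) : Prop :=
  [/\ reflexive le, transitive le, antisymmetric le, total le
    & forall a b c : G, le a b -> le (a + c) (b + c)].

(* Values live in Gamma ∪ {oo}, encoded as option Gamma with None = oo. *)
Definition vle (G : zmodType) (le : rel G) (x y : option G) : bool :=
  match x, y with
  | _, None => true
  | None, Some _ => false
  | Some x', Some y' => le x' y'
  end.

Definition vlt (G : zmodType) (le : rel G) (x y : option G) : bool :=
  vle le x y && ~~ vle le y x.

Definition vadd (G : zmodType) (x y : option G) : option G :=
  match x, y with
  | Some x', Some y' => Some (x' + y')
  | _, _ => None
  end.

Definition valuation (K : fieldType) (G : zmodType) (le : rel G)
    (v : K -> option G) : Prop :=
  [/\ ordered_abelian_group le,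
      forall a : K, v a = None <-> a = 0,
      forall a b : K, v (a * b) = vadd (v a) (v b),
      forall a b : K, vle le (v a) (v (a + b)) || vle le (v b) (v (a + b))
    & forall g : G, exists a : K, v a = Some g].

Definition in_O (K : fieldType) (G : zmodType) (le : rel G)
    (v : K -> option G) (a : K) : Prop := vle le (Some 0) (v a).

Definition VD_field (K : fieldType) (G : zmodType) (le : rel G)
    (v : K -> option G) (D : K -> K) : Prop :=
  [/\ valuation le v,
      forall a b : K, D (a + b) = D a + D b,
      forall a : K, vle le (v a) (v (D a)),
      forall g : G, exists a : K, v a = Some g /\ vlt le (v a) (v (D a))
    & exists e : K, in_O le v e /\
        forall a b : K, D (a * b) = a * D b + b * D a + e * D a * D b].

(* The induced map on the residue field Kv = O/m is surjective:
   for every residue class av (a in O) there is b in O with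
   D(bv) = (Db)v = av, i.e. v(Db - a) > 0. *)
Definition residue_D_surjective (K : fieldType) (G : zmodType) (le : rel G)
    (v : K -> option G) (D : K -> K) : Prop :=
  forall a : K, in_O le v a ->
    exists b : K, in_O le v b /\ vlt le (Some 0) (v (D b - a)).

Definition is_ball (K : fieldType) (G : zmodType) (le : rel G)
    (v : K -> option G) (B : K -> Prop) : Prop :=
  exists (a : K) (g : G), forall x : K, B x <-> vle le (Some g) (v (x - a)).

Definition spherically_complete (K : fieldType) (G : zmodType) (le : rel G)
    (v : K -> option G) : Prop :=
  forall F : (K -> Prop) -> Prop,
    (forall B, F B -> is_ball le v B) ->
    (forall B1 B2, F B1 -> F B2 ->
       (forall x, B1 x -> B2 x) \/ (forall x, B2 x -> B1 x)) ->
    exists x : K, forall B, F B -> B x.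

From mathcomp Require Import all_boot all_algebra.
From mathcomp Require Import boolp classical_sets.
From mathcomp Require Import ring.
Set Implicit Arguments. Unset Strict Implicit. Unset Printing Implicit Defensive.
Import GRing.Theory.
Local Open Scope ring_scope.

(* Fix b and measure how well D a approximates it by v (b - D a).  The balls
   {x | v (x - a) >= v (b - D a)} are nested along any chain of improving
   approximations, so by spherical completeness and Zorn's lemma there is an
   approximation m that no element of its ball improves.  If D m <> b, the
   residue surjectivity lets us correct c = b - D m by some x of value
   >= v c with v (c - D x) > v c, i.e. an element of the ball of m that is a
   strictly better approximation: contradiction. *)

Section ValueOrder.
Variables (G : zmodType) (le : rel G).
Hypothesis le_group : ordered_abelian_group le.

Lemma vle_refl (x : option G) : vle le x x.
Proof. by case: le_group => refl _ _ _ _; case: x => //= ?; apply: refl. Qed.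

Lemma vle_trans (x y z : option G) : vle le x y -> vle le y z -> vle le x z.
Proof.
case: le_group => _ tr _ _ _.
by case: x => [a|]; case: y => [b|]; case: z => [c|] //= ? ?; apply: (tr b).
Qed.

Lemma vltNge (x y : option G) : vlt le x y = ~~ vle le y x.
Proof.
rewrite /vlt; case yx: (vle le y x); first by rewrite andbF.
by case: le_group => _ _ _ tot _; case: x y yx => [a|] [b|] //= /negbT;
  case/orP: (tot a b) => -> // ->.
Qed.

Lemma vlt_le_trans (x y z : option G) : vlt le x y -> vle le y z -> vlt le x z.
Proof.
rewrite !vltNge => /negP yNx yz; apply/negP => zx; apply: yNx.
exact: vle_trans yz zx.
Qed.

Lemma vle_vaddl (a b : option G) : vle le (Some 0) a -> vle le b (vadd a b).
Proof.
case: le_group => _ _ _ _ leD; case: a b => [g|] [h|] //= g_ge0.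
by have := leD _ _ h g_ge0; rewrite add0r.
Qed.

Lemma vlt_vaddr (g : G) (w : option G) :
  vlt le (Some 0) w -> vlt le (Some g) (vadd (Some g) w).
Proof.
rewrite !vltNge; case: le_group => _ _ _ _ leD; case: w => [h|] //= /negP hN.
apply/negP => hg; apply: hN.
by have := leD _ _ (- g) hg; rewrite subrr (addrC g h) addrK.
Qed.

End ValueOrder.

Lemma vaddC (G : zmodType) (a b : option G) : vadd a b = vadd b a.
Proof. by case: a b => [g|] [h|] //=; rewrite addrC. Qed.

Section Valuation.
Variables (K : fieldType) (G : zmodType) (le : rel G) (v : K -> option G).
Hypothesis v_valuation : valuation le v.

Lemma valuation_ordered : ordered_abelian_group le.
Proof. by case: v_valuation. Qed.

Let le_group := valuation_ordered.

Lemma v_eq_None (a : K) : (v a == None) = (a == 0).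
Proof.
case: v_valuation => _ v_None _ _ _.
by apply/eqP/eqP => [/v_None | /v_None].
Qed.

Lemma v0 : v 0 = None.
Proof. by apply/eqP; rewrite v_eq_None. Qed.

Lemma vM (a b : K) : v (a * b) = vadd (v a) (v b).
Proof. by case: v_valuation. Qed.

Lemma v1 : v 1 = Some 0.
Proof.
case E: (v 1) => [g|]; last by move/eqP: E; rewrite v_eq_None oner_eq0.
have := vM 1 1; rewrite mulr1 E /= => -[gg].
by rewrite -[g](addrK g) -gg subrr.
Qed.

(* Since v (-1) + v (-1) = v 1 = 0 and the order is total, v (-1) = 0. *)
Lemma vN (a : K) : v (- a) = v a.
Proof.
case: le_group => _ _ anti tot leD.
have vN1 : v (-1) = Some 0.
  case E: (v (-1)) => [h|]; last by move/eqP: E; rewrite v_eq_None oppr_eq0 oner_eq0.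
  have := vM (-1) (-1); rewrite mulrNN mulr1 v1 E /= => -[hh].
  by case/orP: (tot h 0) => h0; have := leD _ _ h h0;
    rewrite -hh add0r => h0'; congr Some; apply: anti; rewrite h0 h0'.
by rewrite -mulN1r vM vN1; case: (v a) => //= g; rewrite add0r.
Qed.

Lemma vle_add (o : option G) (a b : K) :
  vle le o (v a) -> vle le o (v b) -> vle le o (v (a + b)).
Proof.
move=> oa ob; have [_ _ _ ultra _] := v_valuation.
by case/orP: (ultra a b) => ab;
  [exact: (vle_trans le_group oa ab) | exact: (vle_trans le_group ob ab)].
Qed.

Lemma vlt_add (o : option G) (a b : K) :
  vlt le o (v a) -> vlt le o (v b) -> vlt le o (v (a + b)).
Proof.
move=> oa ob; have [_ _ _ ultra _] := v_valuation.
by case/orP: (ultra a b) => ab;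
  [exact: (vlt_le_trans le_group oa ab) | exact: (vlt_le_trans le_group ob ab)].
Qed.

Lemma v_div_eq0 (c t : K) (g : G) :
  v c = Some g -> v t = Some g -> v (c / t) = Some 0.
Proof.
move=> vc vt; have t_neq0 : t != 0 by rewrite -v_eq_None vt.
case E: (v (c / t)) => [h|].
  have := vM (c / t) t; rewrite divfK // vc vt E /= => -[gh].
  by rewrite -[h](addrK g) -gh subrr.
by move/eqP: E; rewrite v_eq_None mulf_eq0 invr_eq0 -!v_eq_None vc vt.
Qed.

End Valuation.

Section ValuedDerivation.
Variables (K : fieldType) (G : zmodType) (le : rel G) (v : K -> option G).
Variable D : K -> K.
Hypothesis v_valuation : valuation le v.
Hypothesis D_add : forall a b : K, D (a + b) = D a + D b.
Hypothesis vD_ge : forall a : K, vle le (v a) (v (D a)).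

Let le_group := valuation_ordered v_valuation.

Lemma approx_ball_mono (b a x : K) :
  vle le (v (b - D a)) (v x) -> vle le (v (b - D a)) (v (b - D (a + x))).
Proof.
move=> ax; have -> : b - D (a + x) = (b - D a) + - D x by rewrite D_add; ring.
apply: (vle_add v_valuation) => //; first exact: (vle_refl le_group).
by rewrite (vN v_valuation); exact: (vle_trans le_group ax (vD_ge x)).
Qed.

Lemma exists_unimprovable_approx (b : K) :
  spherically_complete le v -> (forall a, D a != b) ->
  exists m, forall x, vle le (v (b - D m)) (v x) ->
    vle le (v (b - D (m + x))) (v (b - D m)).
Proof.
move=> sph_complete Dab.
pose gap a := v (b - D a).
have gap_Some a : exists g, gap a = Some g.
  case E: (gap a) => [g|]; first by exists g.
  by move/eqP: E; rewrite (v_eq_None v_valuation) subr_eq0 eq_sym (negbTE (Dab a)).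
pose R : rel K := fun a a' => vle le (gap a) (v (a' - a)).
have gapR a a' : R a a' -> vle le (gap a) (gap a').
  by move=> aa'; have := approx_ball_mono aa'; rewrite subrKC.
have R_ball a a' x :
    R a a' -> vle le (gap a') (v (x - a')) -> vle le (gap a) (v (x - a)).
  move=> aa' xa'; rewrite -(subrK a' x) -addrA.
  exact: (vle_add v_valuation (vle_trans le_group (gapR _ _ aa') xa') aa').
have [m m_max] : exists m, premaximal R m.
  apply: (ZL_preorder 0).
  - by move=> a; rewrite /R subrr (v0 v_valuation) /=; case: (gap a).
  - by move=> r s t rs st; apply: (R_ball _ _ _ rs st).
  move=> A A_chain.
  have [||z z_in] := sph_complete
    (fun B => exists a, A a /\ B = (fun x => vle le (gap a) (v (x - a)))).
  - by move=> _ [a [_ ->]]; have [g ag] := gap_Some a; exists a, g => x; rewrite ag.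
  - move=> _ _ [a1 [A1 ->]] [a2 [A2 ->]].
    by case: (A_chain a1 a2 A1 A2) => a12; [right|left] => x; apply: R_ball.
  by exists z => a Aa; apply: (z_in _ (ex_intro _ a (conj Aa erefl))).
exists m => x mx; apply: gapR; apply: m_max.
by rewrite /R [m + x]addrC addrK.
Qed.

Hypothesis D_value_group :
  forall g : G, exists a : K, v a = Some g /\ vlt le (v a) (v (D a)).
Variable e : K.
Hypothesis e_in_O : in_O le v e.
Hypothesis D_mul :
  forall a b : K, D (a * b) = a * D b + b * D a + e * D a * D b.
Hypothesis residue_D_surj : residue_D_surjective le v D.

(* Scale c to a unit q = c / t by some t with v t = v c < v (D t), lift a
   residue preimage y of q, and take x = t y. *)
Lemma exists_D_correction (c : K) : c != 0 ->
  exists x, vle le (v c) (v x) /\ vlt le (v c) (v (c - D x)).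
Proof.
move=> c_neq0; case vc: (v c) => [g|]; last first.
  by move/eqP: vc; rewrite (v_eq_None v_valuation) (negbTE c_neq0).
have [t [vt vDt]] := D_value_group g; rewrite vt in vDt.
have t_neq0 : t != 0 by rewrite -(v_eq_None v_valuation) vt.
pose q := c / t.
have q_in_O : in_O le v q.
  by rewrite /in_O (v_div_eq0 v_valuation vc vt) vle_refl.
have [y [y_in_O Dy_near_q]] := residue_D_surj q_in_O.
have Dy_in_O : vle le (Some 0) (v (D y)) := vle_trans le_group y_in_O (vD_ge y).
have vDt_gt : forall a, vle le (Some 0) a -> vlt le (Some g) (vadd a (v (D t))).
  by move=> a a_ge0; exact: (vlt_le_trans le_group vDt (vle_vaddl le_group _ a_ge0)).
exists (t * y); split.
  by rewrite (vM v_valuation) vt vaddC; exact: (vle_vaddl le_group _ y_in_O).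
have -> : c - D (t * y) = - (t * (D y - q) + (y * D t + e * D t * D y)).
  by rewrite D_mul -{1}(divfK t_neq0 c) -/q; ring.
rewrite (vN v_valuation); apply: (vlt_add v_valuation).
  by rewrite (vM v_valuation) vt; exact: (vlt_vaddr le_group g Dy_near_q).
apply: (vlt_add v_valuation); rewrite !(vM v_valuation); first exact: vDt_gt.
rewrite vaddC; apply: (vlt_le_trans le_group _ (vle_vaddl le_group _ Dy_in_O)).
exact: vDt_gt.
Qed.

End ValuedDerivation.

Theorem theorem49 (K : fieldType) (G : zmodType) (le : rel G)
  (v : K -> option G) (D : K -> K) :
  VD_field le v D ->
  spherically_complete le v ->
  residue_D_surjective le v D ->
  forall b : K, exists a : K, D a = b.
Proof.
move=> [v_valuation D_add vD_ge D_value_group [e [e_in_O D_mul]]] sph_complete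
  residue_D_surj b.
apply: contrapT => /forallNP D_neq_b.
have [m m_unimprovable] := exists_unimprovable_approx v_valuation D_add vD_ge
  sph_complete (fun a => introN eqP (D_neq_b a)).
have c_neq0 : b - D m != 0 by rewrite subr_eq0 eq_sym; apply/eqP.
have [x [x_in_ball better]] := exists_D_correction v_valuation vD_ge
  D_value_group e_in_O D_mul residue_D_surj c_neq0.
have := m_unimprovable x x_in_ball.
rewrite D_add opprD addrA.
by move: better; rewrite (vltNge (valuation_ordered v_valuation)) => /negP.
Qed.
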